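(* Let $\mathcal G$ be a finite connected groupoid and $\alpha=(S_g,\alpha_g)_{g\in\mathcal G}$ a unital group-type partial action of $\mathcal G$ on a ring $S=\bigoplus_{y\in\mathcal G_0}S_y$, with $S_g=S1_g$. Let $\mathcal H$ be a subgroupoid of $\mathcal G$ such that the restricted partial action $\alpha_{\mathcal H}$ is group-type, let $\mathcal H=\mathcal H_1\,\dot\cup\cdots\dot\cup\,\mathcal H_r$ be its decomposition into connected components with object sets $Y_1,\dots,Y_r$ (so $\mathcal H_0=Y_1\,\dot\cup\cdots\dot\cup\,Y_r$), let $S_j=\bigoplus_{y\in Y_j}S_y$, $S^c_{\mathcal H}=\bigoplus_{y\in\mathcal G_0\setminus\mathcal H_0}S_y$, and choose $y_j\in Y_j$ for each $j$. Then $$S^{\alpha_{\mathcal H}}=\Big(\bigoplus_{j=1}^r S_j^{\alpha_{\mathcal H_j}}\Big)\oplus S^c_{\mathcal H}\;\simeq\;\Big(\bigoplus_{j=1}^r S_{y_j}^{\alpha_{\mathcal H_j(y_j)}}\Big)\oplus S^c_{\mathcal H}.$$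
   Context: A groupoid is a small category with all morphisms invertible; $\mathcal G_0$ is the set of objects (identified with identity morphisms), $s(g),t(g)$ source and target, $\mathcal G(x,y)=\{g:s(g)=x,t(g)=y\}$, $\mathcal G(x)=\mathcal G(x,x)$; $gh$ is defined iff $s(g)=t(h)$; connected means all $\mathcal G(x,y)\ne\emptyset$; connected components are the full subgroupoids on classes of $x\sim y\iff\mathcal G(x,y)\ne\emptyset$. A partial action $\alpha=(S_g,\alpha_g)_{g\in\mathcal G}$ on a ring $S$: for each $g$, $S_{t(g)}$ is an ideal of $S$, $S_g$ an ideal of $S_{t(g)}$, $\alpha_g:S_{g^{-1}}\to S_g$ a ring isomorphism; $\alpha_x=\mathrm{id}_{S_x}$ for $x\in\mathcal G_0$; for composable $(g,h)$, $\alpha_h^{-1}(S_{g^{-1}}\cap S_h)\subseteq S_{(gh)^{-1}}$ and $\alpha_g\alpha_h(a)=\alpha_{gh}(a)$ there. Unital: $S_g=S1_g$, $1_g$ central idempotent. A transversal for $x$ in a connected groupoid $\mathcal K$ is $\{\tau_y\}_{y\in\mathcal K_0}$, $\tau_y\in\mathcal K(x,y)$, $\tau_x=x$; a partial action of connected $\mathcal K$ on $A=\bigoplus_{y\in\mathcal K_0}A_y$ is group-type if some $x$ and transversal satisfy $A_{\tau_y^{-1}}=A_x$, $A_{\tau_y}=A_y$ for all $y$; a partial action of a non-connected groupoid on such a direct sum is group-type if its restriction to each connected component $\mathcal K_Y$, acting on $\bigoplus_{y\in Y}A_y$, is group-type. For a subgroupoid $\mathcal H$, $\alpha_{\mathcal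 H}=(S_h,\alpha_h)_{h\in\mathcal H}$ is the restricted partial action on $\bigoplus_{z\in\mathcal H_0}S_z$, and $\alpha_{\mathcal H_j}$, $\alpha_{\mathcal H_j(y_j)}$ are the restrictions to $\mathcal H_j$ (on $S_j$) and to $\mathcal H_j(y_j)$ (on $S_{y_j}$). For a subgroupoid $\mathcal K$ and a subring $A\subseteq S$, $A^{\alpha_{\mathcal K}}=\{a\in A:\alpha_k(a1_{k^{-1}})=a1_k\ \forall k\in\mathcal K\}$; in particular $S^{\alpha_{\mathcal H}}$ consists of elements of all of $S$. *)

From HB Require Import structures.
From mathcomp Require Import all_boot all_order all_algebra.
Set Implicit Arguments. Unset Strict Implicit. Unset Printing Implicit Defensive.
Import GRing.Theory.
Local Open Scope ring_scope.

(* A finite groupoid: finite type of objects, finite type of morphisms.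
   [gcomp g h] is the composite gh (meaningful when src g = tgt h). *)
Record groupoid := Groupoid {
  gObj : finType;
  gMor : finType;
  src : gMor -> gObj;
  tgt : gMor -> gObj;
  idm : gObj -> gMor;
  ginv : gMor -> gMor;
  gcomp : gMor -> gMor -> gMor;
  src_idm : forall x, src (idm x) = x;
  tgt_idm : forall x, tgt (idm x) = x;
  src_comp : forall g h, src g = tgt h -> src (gcomp g h) = src h;
  tgt_comp : forall g h, src g = tgt h -> tgt (gcomp g h) = tgt g;
  compA : forall g h k, src g = tgt h -> src h = tgt k ->
            gcomp g (gcomp h k) = gcomp (gcomp g h) k;
  comp_idl : forall g, gcomp (idm (tgt g)) g = g;
  comp_idr : forall g, gcomp g (idm (src g)) = g;
  src_inv : forall g, src (ginv g) = tgt g;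
  tgt_inv : forall g, tgt (ginv g) = src g;
  comp_inv_r : forall g, gcomp g (ginv g) = idm (tgt g);
  comp_inv_l : forall g, gcomp (ginv g) g = idm (src g)
}.

Definition gconnected (G : groupoid) : Prop :=
  forall x y : gObj G, exists g : gMor G, src g = x /\ tgt g = y.

Section PA.
Variables (G : groupoid) (S : pzRingType).

Definition inIdeal (e a : S) : Prop := exists b : S, a = b * e.

Definition ring_iso_on (I J : S -> Prop) (f : S -> S) : Prop :=
  [/\ (forall a, I a -> J (f a)),
      (forall a b, I a -> I b -> f (a + b) = f a + f b),
      (forall a b, I a -> I b -> f (a * b) = f a * f b),
      (forall a b, I a -> I b -> f a = f b -> a = b) &
      (forall c, J c -> exists a, I a /\ f a = c)].

(* Unital partial action (S_g = S e g, e g central idempotent) on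
   S = \bigoplus_{y in G_0} S_y, with S_y = S e (idm y). *)
Definition unital_partial_action (e : gMor G -> S) (alpha : gMor G -> S -> S)
  : Prop :=
  [/\ (forall g, e g * e g = e g /\ forall a, a * e g = e g * a),
      (forall x y : gObj G, x != y -> e (idm x) * e (idm y) = 0),
      \sum_(y : gObj G) e (idm y) = 1 &
      (forall g, e g * e (idm (tgt g)) = e g)] /\
  [/\
      (forall g, ring_iso_on (inIdeal (e (ginv g))) (inIdeal (e g)) (alpha g)),
      (forall x a, inIdeal (e (idm x)) a -> alpha (idm x) a = a) &
      (forall g h, src g = tgt h -> forall a,
          inIdeal (e (ginv h)) a -> inIdeal (e (ginv g)) (alpha h a) ->
          inIdeal (e (ginv (gcomp g h))) a /\
          alpha g (alpha h a) = alpha (gcomp g h) a)].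

Definition group_type (e : gMor G -> S) : Prop :=
  exists (x : gObj G) (tau : gObj G -> gMor G),
    tau x = idm x /\
    forall y, [/\ src (tau y) = x, tgt (tau y) = y,
                  e (ginv (tau y)) = e (idm x) & e (tau y) = e (idm y)].

Definition subgroupoid (H : {set gMor G}) : Prop :=
  (forall g h, g \in H -> h \in H -> src g = tgt h -> gcomp g h \in H) /\
  (forall g, g \in H -> ginv g \in H).

Definition sobj (H : {set gMor G}) : {set gObj G} := [set x | idm x \in H].

Definition hconn (H : {set gMor G}) (x y : gObj G) : bool :=
  [exists h in H, (src h == x) && (tgt h == y)].

Definition comp_of (H : {set gMor G}) (y : gObj G) : {set gObj G} :=
  [set z | hconn H y z].

Definition comp_mor (H : {set gMor G}) (Y : {set gObj G}) : {set gMor G} :=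
  [set h in H | src h \in Y].

Definition isotropy (H : {set gMor G}) (y : gObj G) : {set gMor G} :=
  [set h in H | (src h == y) && (tgt h == y)].

(* alpha_H is group-type: group-type on every connected component *)
Definition group_type_sub (e : gMor G -> S) (H : {set gMor G}) : Prop :=
  forall y, y \in sobj H ->
    exists (x : gObj G) (tau : gObj G -> gMor G),
      x \in comp_of H y /\ tau x = idm x /\
      forall z, z \in comp_of H y ->
        [/\ tau z \in comp_mor H (comp_of H y), src (tau z) = x, tgt (tau z) = z,
            e (ginv (tau z)) = e (idm x) & e (tau z) = e (idm z)].

Definition representatives (H : {set gMor G}) (R : {set gObj G}) : Prop :=
  [/\ (forall y, y \in R -> y \in sobj H),
      (forall z, z \in sobj H -> exists y, y \in R /\ hconn H y z) &
      (forall y y', y \in R -> y' \in R -> hconn H y y' -> y = y')].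

Definition fixed_by (e : gMor G -> S) (alpha : gMor G -> S -> S)
  (K : {set gMor G}) (a : S) : Prop :=
  forall k, k \in K -> alpha k (a * e (ginv k)) = a * e k.

Definition blockid (e : gMor G -> S) (Y : {set gObj G}) : S :=
  \sum_(z in Y) e (idm z).

Definition comp_inv (e : gMor G -> S) (alpha : gMor G -> S -> S)
  (H : {set gMor G}) (Y : {set gObj G}) (a : S) : Prop :=
  inIdeal (blockid e Y) a /\ fixed_by e alpha (comp_mor H Y) a.

Definition loc_inv (e : gMor G -> S) (alpha : gMor G -> S -> S)
  (H : {set gMor G}) (y : gObj G) (a : S) : Prop :=
  inIdeal (e (idm y)) a /\ fixed_by e alpha (isotropy H y) a.

Definition compl_part (e : gMor G -> S) (H : {set gMor G}) (c : S) : Prop :=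
  inIdeal (blockid e [set z | z \notin sobj H]) c.

(* the (external) ring (\bigoplus_{y in R} S_y^{alpha_{H(y)}}) + S^c_H,
   realised as pairs (b, c) with b y = 0 off R *)
Definition dsum_target (e : gMor G -> S) (alpha : gMor G -> S -> S)
  (H : {set gMor G}) (R : {set gObj G}) (p : (gObj G -> S) * S) : Prop :=
  [/\ (forall y, y \in R -> loc_inv e alpha H y (p.1 y)),
      (forall y, y \notin R -> p.1 y = 0) &
      compl_part e H p.2].

Definition dsum_add (p q : (gObj G -> S) * S) : (gObj G -> S) * S :=
  (fun y => p.1 y + q.1 y, p.2 + q.2).
Definition dsum_mul (p q : (gObj G -> S) * S) : (gObj G -> S) * S :=
  (fun y => p.1 y * q.1 y, p.2 * q.2).
Definition dsum_one (e : gMor G -> S) (H : {set gMor G}) (R : {set gObj G})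
  : (gObj G -> S) * S :=
  (fun y => if y \in R then e (idm y) else 0,
   blockid e [set z | z \notin sobj H]).

End PA.

(* The idempotents 1_Y = sum_(z in Y) 1_z of the connected components Y of H,
   together with the idempotent of the objects outside H, are orthogonal central
   idempotents summing to 1, and every morphism of H acts inside one of these
   blocks.  Hence a is alpha_H-invariant iff every block component a 1_Y is, and
   the summands of a block decomposition are recovered by multiplying with the
   block idempotents.
   In a component Y with group-type transversal tau based at x, an invariant a
   satisfies a 1_z = alpha_(tau z) (a 1_x), so it is determined by a 1_x, hence by
   a 1_(y_j).  Conversely, if q in S_(y_j) is fixed by H(y_j), then
   w = alpha_(tau y_j)^-1 q is fixed by H(x), and sum_(z in Y) alpha_(tau z) w is
   H_Y-invariant, since each k : z -> z' of H gives (tau z')^-1 k (tau z) in H(x).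
   So a |-> ((a 1_(y_j))_j, a 1_c) is the required ring isomorphism. *)

From Pilot Require Import Defs.
From HB Require Import structures.
From mathcomp Require Import all_boot all_order all_algebra.
From Stdlib Require Import IndefiniteDescription FunctionalExtensionality.
Import GRing.Theory.
Local Open Scope ring_scope.
Set Implicit Arguments. Unset Strict Implicit.

Local Notation gcompA := Defs.compA.
Local Notation gconj t2 k t1 := (gcomp (ginv t2) (gcomp k t1)).

Section Groupoid.
Variable G : groupoid.
Implicit Types g h k : gMor G.

Lemma ginv_unique g h : src g = tgt h -> gcomp g h = idm (tgt g) -> h = ginv g.
Proof.
move=> sgh /(congr1 (gcomp (ginv g))).
rewrite gcompA ?src_inv ?tgt_inv // comp_inv_l sgh comp_idl => ->.
by rewrite -[in idm _](src_inv g) comp_idr.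
Qed.

Lemma ginvK g : ginv (ginv g) = g.
Proof. by apply/esym/ginv_unique; rewrite ?src_inv // comp_inv_l tgt_inv. Qed.

Lemma ginvM g h : src g = tgt h -> ginv (gcomp g h) = gcomp (ginv h) (ginv g).
Proof.
move=> sgh; apply/esym/ginv_unique; first by rewrite src_comp // tgt_comp ?tgt_inv ?src_inv.
rewrite -gcompA ?tgt_comp ?src_inv ?tgt_inv // (@gcompA _ h) ?src_inv ?tgt_inv //.
by rewrite comp_inv_r -sgh -(tgt_inv g) comp_idl comp_inv_r.
Qed.
Lemma ginv_gconj t1 t2 k : src k = tgt t1 -> tgt k = tgt t2 ->
  ginv (gconj t2 k t1) = gconj t1 (ginv k) t2.
Proof.
move=> sk tk; rewrite ginvM ?ginvK; last by rewrite src_inv tgt_comp.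
by rewrite ginvM // gcompA ?src_inv ?tgt_inv.
Qed.

End Groupoid.

Section RingFacts.
Variable S : pzRingType.
Implicit Types a b f : S.

Lemma inIdealP f a : f * f = f -> inIdeal f a <-> a = a * f.
Proof.
move=> ff; split; last by move=> ->; exists a.
by case=> b ->; rewrite -mulrA ff.
Qed.

Lemma inIdeal_sub f f' a : f * f' = f -> inIdeal f a -> inIdeal f' a.
Proof. by move=> ff' [b ->]; exists (b * f); rewrite -mulrA ff'. Qed.

Lemma mulr_orth_ideals a b f f' :
  a = a * f -> b = b * f' -> (forall c, c * f' = f' * c) -> f * f' = 0 -> a * b = 0.
Proof.
move=> af bf' cf' ff'.
by rewrite af bf' -mulrA (cf' b) (mulrA f) ff' mul0r mulr0.
Qed.

Lemma mulr_cidem f a b : f * f = f -> (forall c, c * f = f * c) ->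
  a * b * f = a * f * (b * f).
Proof.
move=> ff cf.
by rewrite (cf b) [RHS]mulrA -[a * f * f]mulrA ff -[RHS]mulrA -cf mulrA.
Qed.

Lemma mulr_suml_single (T : finType) (A : {pred T}) i0 (x : T -> S) f :
  i0 \in A -> (forall i, i \in A -> i != i0 -> x i * f = 0) ->
  (\sum_(i in A) x i) * f = x i0 * f.
Proof.
move=> i0A x0; rewrite mulr_suml (bigD1 i0) //= big1 ?addr0 // => i /andP [].
exact: x0.
Qed.

End RingFacts.

(* The transversal morphisms of a group-type action are full. *)
Definition full {G : groupoid} {S : pzRingType} (e : gMor G -> S) (g : gMor G) :=
  e (ginv g) = e (idm (src g)) /\ e g = e (idm (tgt g)).

Section PartialAction.
Variables (G : groupoid) (S : pzRingType) (e : gMor G -> S) (alpha : gMor G -> S -> S).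
Hypothesis UPA : unital_partial_action e alpha.
Local Notation E x := (e (idm x)).
Implicit Types g h k t : gMor G.

Lemma e_idem g : e g * e g = e g.
Proof. by case: UPA => [[idem _ _ _] _]; case: (idem g). Qed.

Lemma e_comm g a : a * e g = e g * a.
Proof. by case: UPA => [[idem _ _ _] _]; case: (idem g). Qed.

Lemma e_orth x y : x != y -> E x * E y = 0.
Proof. by case: UPA => [[_ orth _ _] _]; apply: orth. Qed.

Lemma sum_e_idm : \sum_y E y = 1.
Proof. by case: UPA => [[_ _ sum1 _] _]. Qed.

Lemma e_tgt g : e g * E (tgt g) = e g.
Proof. by case: UPA => [[_ _ _ etgt] _]. Qed.

Lemma e_inv_src g : e (ginv g) * E (src g) = e (ginv g).
Proof. by rewrite -(tgt_inv g) e_tgt. Qed.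

Lemma alpha_iso g : ring_iso_on (inIdeal (e (ginv g))) (inIdeal (e g)) (alpha g).
Proof. by case: UPA => [_ [iso _ _]]. Qed.

Lemma alpha_idm x a : inIdeal (E x) a -> alpha (idm x) a = a.
Proof. by case: UPA => [_ [_ id _]]; apply: id. Qed.

Lemma alpha_comp g h : src g = tgt h -> forall a,
  inIdeal (e (ginv h)) a -> inIdeal (e (ginv g)) (alpha h a) ->
  inIdeal (e (ginv (gcomp g h))) a /\ alpha g (alpha h a) = alpha (gcomp g h) a.
Proof. by case: UPA => [_ [_ _ comp]]; apply: comp. Qed.

Lemma inIdeal_eP g a : inIdeal (e g) a <-> a = a * e g.
Proof. exact/inIdealP/e_idem. Qed.

Lemma inIdeal_e g : inIdeal (e g) (e g).
Proof. by exists 1; rewrite mul1r. Qed.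

Lemma inIdeal_tgt g a : inIdeal (e g) a -> inIdeal (E (tgt g)) a.
Proof. exact/inIdeal_sub/e_tgt. Qed.

Lemma inIdeal_src g a : inIdeal (e (ginv g)) a -> inIdeal (E (src g)) a.
Proof. exact/inIdeal_sub/e_inv_src. Qed.

Lemma alpha_in g a : inIdeal (e (ginv g)) a -> inIdeal (e g) (alpha g a).
Proof. by case: (alpha_iso g) => + _ _ _ _; apply. Qed.

Lemma alpha_mul g a b : inIdeal (e (ginv g)) a -> inIdeal (e (ginv g)) b ->
  alpha g (a * b) = alpha g a * alpha g b.
Proof. by case: (alpha_iso g) => _ _ + _ _; apply. Qed.

Lemma alpha_inj g a b : inIdeal (e (ginv g)) a -> inIdeal (e (ginv g)) b ->
  alpha g a = alpha g b -> a = b.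
Proof. by case: (alpha_iso g) => _ _ _ + _; apply. Qed.

Lemma alpha_onto g c : inIdeal (e g) c ->
  exists a, inIdeal (e (ginv g)) a /\ alpha g a = c.
Proof. by case: (alpha_iso g) => _ _ _ _; apply. Qed.

Lemma alpha_invK g a : inIdeal (e (ginv g)) a -> alpha (ginv g) (alpha g a) = a.
Proof.
move=> Ia.
have Iga : inIdeal (e (ginv (ginv g))) (alpha g a) by rewrite ginvK; apply: alpha_in.
have [_ ->] := alpha_comp (src_inv g) Ia Iga.
by rewrite comp_inv_l alpha_idm //; apply: inIdeal_src.
Qed.

Lemma fullV g : full e g -> full e (ginv g).
Proof. by case=> fs ft; split; rewrite ?ginvK ?src_inv ?tgt_inv. Qed.

Lemma inIdeal_comp_full_r t g : full e t -> src g = tgt t -> forall a,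
  inIdeal (e (ginv (gcomp g t))) a <->
  inIdeal (E (src t)) a /\ inIdeal (e (ginv g)) (alpha t a).
Proof.
move=> [fs ft] sg a; split; last first.
  by rewrite -fs => -[Ia Ita]; case: (alpha_comp sg Ia).
move=> Ia; have Ia' : inIdeal (E (src t)) a by move/inIdeal_src: Ia; rewrite src_comp.
split=> //.
have Ita : inIdeal (e (ginv (ginv t))) (alpha t a).
  by rewrite ginvK; apply: alpha_in; rewrite fs.
have sgt : src (gcomp g t) = tgt (ginv t) by rewrite src_comp // tgt_inv.
have := alpha_comp sgt Ita; rewrite alpha_invK ?fs // => /(_ Ia) [].
by rewrite -gcompA ?tgt_inv // comp_inv_r -sg comp_idr.
Qed.

Lemma alpha_comp_full_r t g a : full e t -> src g = tgt t ->
  inIdeal (E (src t)) a -> inIdeal (e (ginv g)) (alpha t a) ->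
  alpha (gcomp g t) a = alpha g (alpha t a).
Proof. by move=> [fs _] sg; rewrite -fs => Ia Ita; case: (alpha_comp sg Ia). Qed.

Lemma inIdeal_comp_full_l t g : full e t -> src t = tgt g -> forall a,
  inIdeal (e (ginv (gcomp t g))) a <-> inIdeal (e (ginv g)) a.
Proof.
move=> [fs ft] st a; split; last first.
  move=> Ia; case: (alpha_comp st Ia) => //.
  by rewrite fs st; apply/inIdeal_tgt/alpha_in.
move=> Ia.
have Ita : inIdeal (e (ginv (ginv t))) (alpha (gcomp t g) a).
  by rewrite ginvK ft -(tgt_comp st); apply/inIdeal_tgt/alpha_in.
have stg : src (ginv t) = tgt (gcomp t g) by rewrite src_inv tgt_comp.
have [] := alpha_comp stg Ia Ita.
by rewrite gcompA ?src_inv // comp_inv_l st comp_idl.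
Qed.

Lemma alpha_comp_full_l t g a : full e t -> src t = tgt g ->
  inIdeal (e (ginv g)) a -> alpha (gcomp t g) a = alpha t (alpha g a).
Proof.
move=> [fs _] st Ia; case: (alpha_comp st Ia) => //.
by rewrite fs st; apply/inIdeal_tgt/alpha_in.
Qed.

Lemma alpha_e_conj t1 t2 k : full e t1 -> full e t2 -> src t1 = src t2 ->
  src k = tgt t1 -> tgt k = tgt t2 ->
  alpha t1 (e (ginv (gconj t2 k t1))) = e (ginv k).
Proof.
move=> ft1 ft2 s12 sk tk; set m := gconj t2 k t1.
have s2 : src (ginv t2) = tgt (gcomp k t1) by rewrite src_inv tgt_comp.
have inIdeal_m b : inIdeal (e (ginv m)) b <->
    inIdeal (E (src t1)) b /\ inIdeal (e (ginv k)) (alpha t1 b).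
  by rewrite (inIdeal_comp_full_l (fullV ft2) s2) (inIdeal_comp_full_r ft1 sk).
have [Im1 Imk] := (inIdeal_m _).1 (inIdeal_e (ginv m)).
set f := alpha t1 (e (ginv m)).
have Ik : inIdeal (e t1) (e (ginv k)) by rewrite ft1.2 -sk; apply/inIdeal_src/inIdeal_e.
have [c [Ic ck]] := alpha_onto Ik.
have Icm : inIdeal (e (ginv m)) c.
  by apply/inIdeal_m; rewrite -ft1.1 ck; split=> //; apply: inIdeal_e.
have Im : inIdeal (e (ginv t1)) (e (ginv m)) by rewrite ft1.1.
have kf : e (ginv k) = alpha t1 c * f.
  by rewrite -ck /f -alpha_mul // -(inIdeal_eP _ _).1.
have ff : f * f = f by rewrite /f -alpha_mul // e_idem.
have -> : f = f * e (ginv k) by apply/inIdeal_eP.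
by rewrite e_comm {1}kf -mulrA ff -kf.
Qed.

Lemma alpha_fixed_conj t1 t2 k w : full e t1 -> full e t2 -> src t1 = src t2 ->
  src k = tgt t1 -> tgt k = tgt t2 -> inIdeal (E (src t1)) w ->
  alpha (gconj t2 k t1) (w * e (ginv (gconj t2 k t1))) = w * e (gconj t2 k t1) ->
  alpha k (alpha t1 w * e (ginv k)) = alpha t2 w * e k.
Proof.
move=> ft1 ft2 s12 sk tk Iw; set m := gconj t2 k t1 => fix_m.
have s2 : src (ginv t2) = tgt (gcomp k t1) by rewrite src_inv tgt_comp.
set b := w * e (ginv m).
have Ibk1 : inIdeal (e (ginv (gcomp k t1))) b.
  by apply/(inIdeal_comp_full_l (fullV ft2) s2); exists w.
have [Ib1 Ibk] := (inIdeal_comp_full_r ft1 sk b).1 Ibk1.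
move: fix_m; rewrite /m (alpha_comp_full_l (fullV ft2) s2 Ibk1).
rewrite (alpha_comp_full_r ft1 sk Ib1 Ibk) -/m => fix_m.
have Ikb : inIdeal (e (ginv (ginv t2))) (alpha k (alpha t1 b)).
  by rewrite ginvK ft2.2 -tk; apply/inIdeal_tgt/alpha_in.
have := alpha_invK Ikb; rewrite fix_m ginvK => kb.
have Iw1 : inIdeal (e (ginv t1)) w by rewrite ft1.1.
have Iw2 : inIdeal (e (ginv t2)) w by rewrite ft2.1 -s12.
have sm : src m = src t1 by rewrite /m !src_comp // ?tgt_comp // src_inv.
have tm : tgt m = src t2 by rewrite /m tgt_comp ?tgt_inv // src_inv tgt_comp.
have Im1 : inIdeal (e (ginv t1)) (e (ginv m)).
  by rewrite ft1.1 -sm; apply/inIdeal_src/inIdeal_e.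
have Im2 : inIdeal (e (ginv t2)) (e m).
  by rewrite ft2.1 -tm; apply/inIdeal_tgt/inIdeal_e.
have t1b : alpha t1 b = alpha t1 w * e (ginv k).
  by rewrite /b alpha_mul // alpha_e_conj.
have t2m : alpha t2 (e m) = e k.
  have sk' : src (ginv k) = tgt t2 by rewrite src_inv.
  have tk' : tgt (ginv k) = tgt t1 by rewrite tgt_inv.
  by rewrite -(ginvK k) -(alpha_e_conj ft2 ft1 (esym s12) sk' tk') ginv_gconj ?ginvK.
by rewrite -t1b -kb alpha_mul // t2m.
Qed.

End PartialAction.

Section BlockIdempotents.
Variables (G : groupoid) (S : pzRingType) (e : gMor G -> S) (alpha : gMor G -> S -> S).
Hypothesis UPA : unital_partial_action e alpha.
Local Notation E x := (e (idm x)).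
Local Notation B := (blockid e).
Implicit Types Y : {set gObj G}.

Lemma e_idmM w z : E w * E z = if w == z then E z else 0.
Proof. by case: eqP => [->|/eqP]; [exact: (e_idem UPA) | exact: (e_orth UPA)]. Qed.

Lemma e_blockid z Y : E z * B Y = if z \in Y then E z else 0.
Proof.
rewrite /blockid mulr_sumr; case: ifP => zY.
  rewrite (bigD1 z) //= (e_idem UPA) big1 ?addr0 // => w /andP [_ wz].
  by rewrite e_idmM eq_sym (negbTE wz).
by apply: big1 => w wY; rewrite e_idmM; case: eqP => // wz; rewrite wz wY in zY.
Qed.

Lemma blockid_comm Y a : a * B Y = B Y * a.
Proof.
by rewrite /blockid mulr_sumr mulr_suml; apply: eq_bigr => z _; rewrite (e_comm UPA).
Qed.

Lemma blockid_e z Y : B Y * E z = if z \in Y then E z else 0.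
Proof. by rewrite -blockid_comm e_blockid. Qed.

Lemma blockid_idem Y : B Y * B Y = B Y.
Proof. by rewrite {1}/blockid mulr_suml; apply: eq_bigr => z zY; rewrite e_blockid zY. Qed.

Lemma blockid_disj Y1 Y2 : [disjoint Y1 & Y2] -> B Y1 * B Y2 = 0.
Proof.
move=> Y12; rewrite {1}/blockid mulr_suml; apply: big1 => z zY1.
by rewrite e_blockid (disjointFr Y12 zY1).
Qed.

Lemma inIdeal_blockidP Y a : inIdeal (B Y) a <-> a = a * B Y.
Proof. exact/inIdealP/blockid_idem. Qed.

Lemma blockid_mul_e_in f z Y : z \in Y -> f = f * E z -> B Y * f = f.
Proof.
by move=> zY fz; rewrite fz (e_comm UPA) mulrA blockid_e zY -(e_comm UPA).
Qed.

End BlockIdempotents.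

Section Components.
Variables (G : groupoid) (H : {set gMor G}) (R : {set gObj G}).
Hypothesis SH : subgroupoid H.
Hypothesis RH : representatives H R.

Lemma hconnP x y :
  reflect (exists h, [/\ h \in H, src h = x & tgt h = y]) (hconn H x y).
Proof.
apply: (iffP existsP) => [[h /andP [hH /andP [/eqP <- /eqP <-]]]|[h [hH <- <-]]].
  by exists h.
by exists h; rewrite hH !eqxx.
Qed.

Lemma hconn_sym x y : hconn H x y -> hconn H y x.
Proof.
case/hconnP=> h [hH <- <-]; apply/hconnP; exists (ginv h).
by rewrite src_inv tgt_inv; split=> //; apply: SH.2.
Qed.

Lemma hconn_trans x y z : hconn H x y -> hconn H y z -> hconn H x z.
Proof.
case/hconnP=> h [hH <- th]; case/hconnP=> k [kH sk <-]; apply/hconnP.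
have skh : src k = tgt h by rewrite sk.
by exists (gcomp k h); rewrite src_comp // tgt_comp //; split=> //; apply: SH.1.
Qed.

Lemma sobj_src k : k \in H -> src k \in sobj H.
Proof.
move=> kH; rewrite inE -comp_inv_l.
by apply: SH.1 => //; [apply: SH.2 | rewrite src_inv].
Qed.

Lemma comp_of_sobj y z : z \in comp_of H y -> z \in sobj H.
Proof.
rewrite inE => /hconnP [h [hH _ <-]]; rewrite -src_inv.
by apply/sobj_src/SH.2.
Qed.

Lemma comp_of_refl y : y \in sobj H -> y \in comp_of H y.
Proof. by rewrite !inE => yH; apply/hconnP; exists (idm y); rewrite src_idm tgt_idm. Qed.

Lemma comp_of_tgt y k : k \in H -> src k \in comp_of H y -> tgt k \in comp_of H y.
Proof.
by move=> kH; rewrite !inE => yk; apply: (hconn_trans yk); apply/hconnP; exists k.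
Qed.

Lemma reps_sobj y : y \in R -> y \in sobj H.
Proof. by case: RH => + _ _; apply. Qed.

Lemma reps_cover z : z \in sobj H -> exists2 y, y \in R & z \in comp_of H y.
Proof. by case: RH => _ + _ => /[apply] -[y [yR yz]]; exists y; rewrite ?inE. Qed.

Lemma reps_comp_uniq y y' z : y \in R -> y' \in R ->
  z \in comp_of H y -> z \in comp_of H y' -> y = y'.
Proof.
case: RH => _ _ uniq yR y'R; rewrite !inE => yz y'z.
exact: (uniq _ _ yR y'R (hconn_trans yz (hconn_sym y'z))).
Qed.

Lemma comp_of_disj y y' : y \in R -> y' \in R -> y != y' ->
  [disjoint comp_of H y & comp_of H y'].
Proof.
move=> yR y'R /eqP yy'; apply/pred0P => z /=.
by apply/negP => /andP [yz y'z]; apply: yy'; apply: (reps_comp_uniq yR y'R yz y'z).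
Qed.

Lemma comp_of_disj_compl y : [disjoint comp_of H y & [set z | z \notin sobj H]].
Proof.
by apply/pred0P => z /=; rewrite inE; apply/negP => /andP [/comp_of_sobj ->].
Qed.

Lemma gconj_isotropy t1 t2 k : t1 \in H -> t2 \in H -> k \in H -> src t1 = src t2 ->
  src k = tgt t1 -> tgt k = tgt t2 -> gconj t2 k t1 \in isotropy H (src t1).
Proof.
move=> t1H t2H kH s12 sk tk.
have skt1 : src (ginv t2) = tgt (gcomp k t1) by rewrite src_inv tgt_comp.
rewrite inE !src_comp // tgt_comp // tgt_inv s12 !eqxx !andbT.
by apply: SH.1 => //; [exact: SH.2 | exact: SH.1].
Qed.

End Components.

Section Decomposition.
Variables (G : groupoid) (S : pzRingType) (e : gMor G -> S) (alpha : gMor G -> S -> S).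
Hypothesis UPA : unital_partial_action e alpha.
Variables (H : {set gMor G}) (R : {set gObj G}).
Hypothesis SH : subgroupoid H.
Hypothesis RH : representatives H R.
Local Notation E x := (e (idm x)).
Local Notation B := (blockid e).
Local Notation Bc := (blockid e [set z | z \notin sobj H]).

Lemma sum_blockid_comp_of : \sum_(y in R) B (comp_of H y) + Bc = 1.
Proof.
rewrite -(sum_e_idm UPA).
have -> : \sum_(y in R) B (comp_of H y) = \sum_z (if z \in sobj H then E z else 0).
  rewrite /blockid (eq_bigr (fun y => \sum_z if z \in comp_of H y then E z else 0));
    last by move=> y _; rewrite big_mkcond.
  rewrite exchange_big /=; apply: eq_bigr => z _; case: ifP => zH.
    have [y0 y0R zy0] := reps_cover RH zH.
    rewrite (bigD1 y0) //= zy0 big1 ?addr0 // => y /andP [yR /negbTE yy0].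
    by case: ifP => // zy; rewrite (reps_comp_uniq SH RH yR y0R zy zy0) eqxx in yy0.
  by apply: big1 => y _; case: ifP => // /(comp_of_sobj SH); rewrite zH.
rewrite /blockid [\sum_(z in _) _]big_mkcond -big_split /=.
by apply: eq_bigr => z _; rewrite inE; case: ifP; rewrite ?addr0 ?add0r.
Qed.

Section DecomposedElement.
Variables (a_ : gObj G -> S) (c : S).
Hypothesis a_block : forall y, y \in R -> inIdeal (B (comp_of H y)) (a_ y).
Hypothesis c_compl : compl_part e H c.

Lemma decomp_blockid y0 : y0 \in R -> (\sum_(y in R) a_ y + c) * B (comp_of H y0) = a_ y0.
Proof.
move=> y0R; have /(inIdeal_blockidP UPA) cBc := c_compl.
have aB y : y \in R -> a_ y = a_ y * B (comp_of H y) by move/a_block/(inIdeal_blockidP UPA).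
rewrite mulrDl (mulr_suml_single y0R) => [|y yR yy0]; last first.
  by rewrite (aB y yR) -mulrA (blockid_disj UPA) ?mulr0 // (comp_of_disj SH RH).
rewrite -aB // cBc -mulrA (blockid_disj UPA) ?mulr0 ?addr0 //.
by rewrite disjoint_sym (comp_of_disj_compl SH).
Qed.

Lemma decomp_compl : (\sum_(y in R) a_ y + c) * Bc = c.
Proof.
have /(inIdeal_blockidP UPA) cBc := c_compl.
have aB y : y \in R -> a_ y = a_ y * B (comp_of H y) by move/a_block/(inIdeal_blockidP UPA).
rewrite mulrDl -cBc mulr_suml big1 ?add0r // => y yR.
by rewrite (aB y yR) -mulrA (blockid_disj UPA) ?mulr0 // (comp_of_disj_compl SH).
Qed.

Lemma decomp_mul_e y0 z f : y0 \in R -> z \in comp_of H y0 -> f = f * E z ->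
  (\sum_(y in R) a_ y + c) * f = a_ y0 * f.
Proof.
move=> y0R zy0 fz.
by rewrite -{1}(blockid_mul_e_in UPA zy0 fz) mulrA decomp_blockid.
Qed.

End DecomposedElement.

Lemma fixed_by_decomp a_ c :
  (forall y, y \in R -> comp_inv e alpha H (comp_of H y) (a_ y)) -> compl_part e H c ->
  fixed_by e alpha H (\sum_(y in R) a_ y + c).
Proof.
move=> a_inv c_compl k kH.
have a_block y : y \in R -> inIdeal (B (comp_of H y)) (a_ y) by case/a_inv.
have [y0 y0R sk] := reps_cover RH (sobj_src SH kH).
rewrite (decomp_mul_e a_block c_compl y0R sk); last by rewrite (e_inv_src UPA).
rewrite (decomp_mul_e a_block c_compl y0R (comp_of_tgt SH kH sk)); last by rewrite (e_tgt UPA).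
by case: (a_inv y0 y0R) => _; apply; rewrite inE kH sk.
Qed.

Lemma fixed_byP a : fixed_by e alpha H a <->
  exists a_ c, [/\ (forall y, y \in R -> comp_inv e alpha H (comp_of H y) (a_ y)),
                   compl_part e H c & a = \sum_(y in R) a_ y + c].
Proof.
split=> [a_fix|[a_ [c [a_inv c_compl ->]]]]; last exact: fixed_by_decomp.
exists (fun y => a * B (comp_of H y)), (a * Bc); split.
- move=> y yR; split=> [|k]; first by exists a.
  rewrite inE => /andP [kH sk].
  rewrite -!mulrA (blockid_mul_e_in UPA sk); last by rewrite (e_inv_src UPA).
  rewrite (blockid_mul_e_in UPA (comp_of_tgt SH kH sk)); last by rewrite (e_tgt UPA).
  exact: a_fix.
- by exists a.
- by rewrite -mulr_sumr -mulrDr sum_blockid_comp_of mulr1.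
Qed.

Lemma decomp_inj a_ b_ c d :
  (forall y, y \in R -> inIdeal (B (comp_of H y)) (a_ y)) ->
  (forall y, y \in R -> inIdeal (B (comp_of H y)) (b_ y)) ->
  compl_part e H c -> compl_part e H d ->
  \sum_(y in R) a_ y + c = \sum_(y in R) b_ y + d ->
  (forall y, y \in R -> a_ y = b_ y) /\ c = d.
Proof.
move=> a_block b_block c_compl d_compl ab; split=> [y yR|].
  by rewrite -(decomp_blockid a_block c_compl yR) ab decomp_blockid.
by rewrite -(decomp_compl a_block c_compl) ab decomp_compl.
Qed.

End Decomposition.

Section Transversal.
Variables (G : groupoid) (S : pzRingType) (e : gMor G -> S) (alpha : gMor G -> S -> S).
Hypothesis UPA : unital_partial_action e alpha.
Variable H : {set gMor G}.
Hypothesis SH : subgroupoid H.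
Local Notation E x := (e (idm x)).

Definition transversal (Y : {set gObj G}) (x : gObj G) (tau : gObj G -> gMor G) :=
  forall z, z \in Y -> [/\ tau z \in H, src (tau z) = x, tgt (tau z) = z & full e (tau z)].

Lemma fixed_isotropy_transport t w : t \in H -> full e t -> inIdeal (E (src t)) w ->
  fixed_by e alpha (isotropy H (src t)) w ->
  fixed_by e alpha (isotropy H (tgt t)) (alpha t w).
Proof.
move=> tH ft Iw w_fix k; rewrite inE => /andP [kH /andP [/eqP sk /eqP tk]].
apply: (alpha_fixed_conj UPA ft ft erefl sk tk Iw); apply: w_fix.
exact: (gconj_isotropy SH tH tH kH erefl sk tk).
Qed.

Variables (y x : gObj G) (tau : gObj G -> gMor G).
Hypothesis tau_tr : transversal (comp_of H y) x tau.

Lemma fixed_by_transversal a z : fixed_by e alpha H a -> z \in comp_of H y ->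
  a * E z = alpha (tau z) (a * E x).
Proof.
move=> a_fix zy; have [tH st tt [fs ft]] := tau_tr zy.
by rewrite -{1}tt -st -fs -ft a_fix.
Qed.

Definition transversal_sum (w : S) := \sum_(z in comp_of H y) alpha (tau z) w.

Section TransversalSum.
Variable w : S.
Hypothesis w_x : inIdeal (E x) w.

Lemma alpha_transversal_e z : z \in comp_of H y -> alpha (tau z) w = alpha (tau z) w * E z.
Proof.
move=> zy; have [_ st tt [fs ft]] := tau_tr zy.
have : inIdeal (e (tau z)) (alpha (tau z) w) by apply: (alpha_in UPA); rewrite fs st.
by rewrite ft tt => /(inIdeal_eP UPA).
Qed.

Lemma transversal_sum_mul_e z0 f : z0 \in comp_of H y -> f = f * E z0 ->
  transversal_sum w * f = alpha (tau z0) w * f.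
Proof.
move=> z0y fz0; apply: mulr_suml_single => // z zy zz0.
apply: (mulr_orth_ideals (alpha_transversal_e zy) fz0); first exact: (e_comm UPA).
exact: (e_orth UPA).
Qed.

Lemma transversal_sum_comp_inv : fixed_by e alpha (isotropy H x) w ->
  comp_inv e alpha H (comp_of H y) (transversal_sum w).
Proof.
move=> w_fix; split.
  apply/(inIdeal_blockidP UPA); rewrite /transversal_sum mulr_suml.
  apply: eq_bigr => z zy.
  by rewrite {2}(alpha_transversal_e zy) -mulrA (e_blockid UPA) zy -alpha_transversal_e.
move=> k; rewrite inE => /andP [kH sk]; have tk := comp_of_tgt SH kH sk.
rewrite (transversal_sum_mul_e sk); last by rewrite (e_inv_src UPA).
rewrite (transversal_sum_mul_e tk); last by rewrite (e_tgt UPA).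
have [t1H st1 tt1 ft1] := tau_tr sk; have [t2H st2 tt2 ft2] := tau_tr tk.
have s12 : src (tau (src k)) = src (tau (tgt k)) by rewrite st1 st2.
apply: (alpha_fixed_conj UPA ft1 ft2 s12); rewrite ?st1 ?tt1 ?tt2 //.
by apply: w_fix; rewrite -st1; apply: gconj_isotropy; rewrite ?tt1 ?tt2.
Qed.

End TransversalSum.
End Transversal.

Section Isomorphism.
Variables (G : groupoid) (S : pzRingType) (e : gMor G -> S) (alpha : gMor G -> S -> S).
Hypothesis UPA : unital_partial_action e alpha.
Variables (H : {set gMor G}) (R : {set gObj G}).
Hypothesis SH : subgroupoid H.
Hypothesis GTS : group_type_sub e H.
Hypothesis RH : representatives H R.
Local Notation E x := (e (idm x)).
Local Notation Bc := (blockid e [set z | z \notin sobj H]).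

Lemma comp_of_transversal y : y \in sobj H ->
  exists x tau, transversal e H (comp_of H y) x tau.
Proof.
case/GTS=> x [tau [_ [_ tau_tr]]]; exists x, tau => z zy.
case: (tau_tr z zy); rewrite inE => /andP [tH _] st tt fs ft.
by split=> //; split; rewrite ?st ?tt.
Qed.

Lemma loc_inv_extend y q : y \in R -> loc_inv e alpha H y q ->
  exists2 a, comp_inv e alpha H (comp_of H y) a & a * E y = q.
Proof.
move=> yR [Iq q_fix]; have yy := comp_of_refl (reps_sobj RH yR).
have [x [tau tau_tr]] := comp_of_transversal (reps_sobj RH yR).
have [tH st tt ft] := tau_tr y yy.
have ftV := fullV ft.
have Iq' : inIdeal (e (ginv (ginv (tau y)))) q by rewrite ginvK ft.2 tt.
set w := alpha (ginv (tau y)) q.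
have Iw : inIdeal (E x) w by rewrite -st -ft.1; apply: (alpha_in UPA).
have w_fix : fixed_by e alpha (isotropy H x) w.
  rewrite -st -tgt_inv; apply: (fixed_isotropy_transport UPA SH (SH.2 _ tH) ftV);
    by rewrite src_inv tt.
exists (transversal_sum alpha H y tau w).
  exact: (transversal_sum_comp_inv UPA SH tau_tr Iw).
rewrite (transversal_sum_mul_e UPA tau_tr Iw yy); last by rewrite (e_idem UPA).
by rewrite -(alpha_transversal_e UPA tau_tr Iw yy) /w -{1}(ginvK (tau y)) (alpha_invK UPA).
Qed.

Definition rep_proj (a : S) : (gObj G -> S) * S :=
  (fun y => if y \in R then a * E y else 0, a * Bc).

Lemma rep_proj_target a : fixed_by e alpha H a -> dsum_target e alpha H R (rep_proj a).
Proof.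
move=> a_fix; split=> [y yR /=|y /negbTE /= -> //|]; last by exists a.
rewrite yR; split=> [|k]; first by exists a.
rewrite inE => /andP [kH /andP [/eqP sk /eqP tk]].
rewrite -!mulrA -[E y * e (ginv k)](e_comm UPA) -[E y * e k](e_comm UPA).
by rewrite -{1}sk (e_inv_src UPA) -{1}tk (e_tgt UPA) a_fix.
Qed.

Lemma rep_projD a b : rep_proj (a + b) = dsum_add (rep_proj a) (rep_proj b).
Proof.
rewrite /rep_proj /dsum_add /= mulrDl; congr pair.
by apply: functional_extensionality => y; case: ifP; rewrite ?mulrDl ?addr0.
Qed.

Lemma rep_projM a b : rep_proj (a * b) = dsum_mul (rep_proj a) (rep_proj b).
Proof.
rewrite /rep_proj /dsum_mul /=; congr pair.
  apply: functional_extensionality => y; case: ifP; rewrite ?mulr0 // => _.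
  by apply: mulr_cidem; [exact: (e_idem UPA) | exact: (e_comm UPA)].
by apply: mulr_cidem; [exact: (blockid_idem UPA) | exact: (blockid_comm UPA)].
Qed.

Lemma rep_proj1 : rep_proj 1 = dsum_one e H R.
Proof.
rewrite /rep_proj /dsum_one mul1r; congr pair.
by apply: functional_extensionality => y; rewrite mul1r.
Qed.

Lemma rep_proj_inj a b : fixed_by e alpha H a -> fixed_by e alpha H b ->
  rep_proj a = rep_proj b -> a = b.
Proof.
move=> a_fix b_fix ab.
have abR y : y \in R -> a * E y = b * E y.
  by move=> yR; have := congr1 (fun p => p.1 y) ab; rewrite /= yR.
have abc : a * Bc = b * Bc := congr1 snd ab.
suff abE z : a * E z = b * E z.
  by rewrite -[a]mulr1 -[b]mulr1 -(sum_e_idm UPA) !mulr_sumr; apply: eq_bigr.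
have [zH|zH] := boolP (z \in sobj H); last first.
  have BcE : Bc * E z = E z by rewrite (blockid_e UPA) inE zH.
  by rewrite -BcE !mulrA abc.
have [y yR zy] := reps_cover RH zH.
have yy := comp_of_refl (reps_sobj RH yR).
have [x [tau tau_tr]] := comp_of_transversal (reps_sobj RH yR).
have abx : a * E x = b * E x.
  have [_ st _ [fs _]] := tau_tr y yy.
  apply: (alpha_inj UPA (g := tau y)); rewrite ?fs ?st; try by eexists.
  by rewrite -!(fixed_by_transversal tau_tr) ?abR.
by rewrite (fixed_by_transversal tau_tr a_fix zy) abx -(fixed_by_transversal tau_tr b_fix zy).
Qed.

Lemma rep_proj_onto p : dsum_target e alpha H R p ->
  exists2 a, fixed_by e alpha H a & rep_proj a = p.
Proof.
case: p => p1 p2 [p1_inv p1_out p2_compl].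
have a_ex y : exists a, y \in R ->
    comp_inv e alpha H (comp_of H y) a /\ a * E y = p1 y.
  have [yR|yR] := boolP (y \in R); last by exists 0.
  by have [a a_inv ay] := loc_inv_extend yR (p1_inv y yR); exists a.
have [a_ a_ext] := functional_choice _ a_ex.
have a_inv y : y \in R -> comp_inv e alpha H (comp_of H y) (a_ y) by case/a_ext.
have a_block y : y \in R -> inIdeal (blockid e (comp_of H y)) (a_ y) by case/a_inv.
exists (\sum_(y in R) a_ y + p2); first exact: fixed_by_decomp.
rewrite /rep_proj (decomp_compl UPA SH a_block p2_compl); congr pair.
apply: functional_extensionality => y; have [yR|/p1_out //] := boolP (y \in R).
have yy := comp_of_refl (reps_sobj RH yR).
rewrite (decomp_mul_e UPA SH RH a_block p2_compl yR yy); last by rewrite (e_idem UPA).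
by case: (a_ext y yR).
Qed.

End Isomorphism.

Theorem corollary3p4 (G : groupoid) (S : pzRingType)
  (e : gMor G -> S) (alpha : gMor G -> S -> S)
  (H : {set gMor G}) (R : {set gObj G}) :
  gconnected G ->
  unital_partial_action e alpha ->
  group_type e ->
  subgroupoid H ->
  group_type_sub e H ->
  representatives H R ->
  (* S^{alpha_H} = (\bigoplus_j S_j^{alpha_{H_j}}) + S^c_H ... *)
  ((forall a : S, fixed_by e alpha H a <->
      exists (a_ : gObj G -> S) (c : S),
        [/\ (forall y, y \in R -> comp_inv e alpha H (comp_of H y) (a_ y)),
            compl_part e H c &
            a = \sum_(y in R) a_ y + c]) /\
   (* ... and the sum is direct *)
   (forall (a_ b_ : gObj G -> S) (c d : S),
      (forall y, y \in R -> inIdeal (blockid e (comp_of H y)) (a_ y)) ->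
      (forall y, y \in R -> inIdeal (blockid e (comp_of H y)) (b_ y)) ->
      compl_part e H c -> compl_part e H d ->
      \sum_(y in R) a_ y + c = \sum_(y in R) b_ y + d ->
      (forall y, y \in R -> a_ y = b_ y) /\ c = d)) /\
  (* S^{alpha_H} is ring isomorphic to (\bigoplus_j S_{y_j}^{alpha_{H_j(y_j)}}) + S^c_H *)
  (exists phi : S -> (gObj G -> S) * S,
    [/\ (forall a, fixed_by e alpha H a -> dsum_target e alpha H R (phi a)),
        (forall a b, fixed_by e alpha H a -> fixed_by e alpha H b ->
           phi a = phi b -> a = b),
        (forall p, dsum_target e alpha H R p ->
           exists a, fixed_by e alpha H a /\ phi a = p),
        (forall a b, fixed_by e alpha H a -> fixed_by e alpha H b ->
           phi (a + b) = dsum_add (phi a) (phi b) /\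
           phi (a * b) = dsum_mul (phi a) (phi b)) &
        phi 1 = dsum_one e H R]).
Proof.
move=> _ UPA _ SH GTS RH; split; first split.
- exact: (fixed_byP UPA SH RH).
- exact: (decomp_inj UPA SH RH).
exists (rep_proj e H R); split.
- exact: rep_proj_target.
- exact: rep_proj_inj.
- by move=> p /(rep_proj_onto UPA SH GTS RH) [a]; exists a.
- by move=> a b _ _; rewrite rep_projD (rep_projM UPA).
- exact: rep_proj1.
Qed.
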